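(* Let $n \geq 1$ be an integer and consider Nim on the hypercube $Q_{2n}$ in which every edge has weight $1$, with the playing piece $\Delta$ starting at the vertex $\emptyset$. Then the second player $P_2$ has a winning strategy.
   Context: Nim on a graph: two players agree on a finite simple undirected graph $G$ whose edges carry positive integer weights, and a starting vertex on which a playing piece $\Delta$ is placed. Players $P_1$ (who moves first) and $P_2$ alternate. On a turn, the player chooses an edge of positive weight incident with the vertex currently holding $\Delta$, lowers that edge's weight by a positive integer amount, and moves $\Delta$ to the other endpoint of that edge. Edges of weight $0$ are no longer playable. A player who cannot move (no playable edge is incident with $\Delta$) loses. With unit weight, each edge can be traversed at most once in total. The hypercube $Q_m$ has as vertices the subsets $X \subseteq \{1,\dots,m\}$, two vertices being adjacent iff they differ in exactly one element; $\emptyset$ denotes the empty set. *)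

From mathcomp Require Import all_boot.
Set Implicit Arguments. Unset Strict Implicit. Unset Printing Implicit Defensive.

(* Edge weights are stored as a function
   on 2-element vertex sets: the weight of edge {x,y} is [w [set x; y]]
   (values on non-edges are irrelevant: they are never read nor changed). *)

Definition simple_graph (V : finType) (adj : rel V) : Prop :=
  irreflexive adj /\ symmetric adj.

Definition nim_pos (V : finType) : Type := (V * ({set V} -> nat))%type.

Definition nim_move (V : finType) (adj : rel V) (p q : nim_pos V) : Prop :=
  let: (v, w) := p in
  let: (u, w') := q in
  adj v u /\
  exists k : nat, 0 < k /\ k <= w [set v; u] /\
    forall e : {set V}, w' e = (if e == [set v; u] then w e - k else w e).

(* Winning / losing positions for the player about to move (the game is
   finite, so the inductive characterisation = existence of a winning
   strategy).  A player who cannot move loses. *)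
Inductive nim_lose (V : finType) (adj : rel V) : nim_pos V -> Prop :=
| NimLose p : (forall q, nim_move adj p q -> nim_win adj q) -> nim_lose adj p
with nim_win (V : finType) (adj : rel V) : nim_pos V -> Prop :=
| NimWin p q : nim_move adj p q -> nim_lose adj q -> nim_win adj p.

(* The player to move from [p] is P_1; P_2 has a winning strategy iff the
   starting position is losing for the player to move. *)
Definition second_player_wins (V : finType) (adj : rel V) (p : nim_pos V) :=
  nim_lose adj p.

Definition hypercube_adj (m : nat) : rel {set 'I_m} :=
  fun A B => #|(A :\: B) :|: (B :\: A)| == 1.

Definition unit_weights (V : finType) : {set V} -> nat := fun _ => 1.
Arguments hypercube_adj : clear implicits.
Arguments unit_weights : clear implicits.

From mathcomp Require Import all_boot.
Set Implicit Arguments. Unset Strict Implicit. Unset Printing Implicit Defensive.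

(* Pair the coordinates by a fixed-point-free involution p (here 2i <-> 2i+1)
   and call a vertex X balanced at c when c and p c are both in X or both
   out.  Every edge is {X, X + c} for a unique (X, c) with X balanced at c,
   and it is paired with the edge {X + c, X + c + p c}.  If paired edges have
   equal weights and P_1 moves from a balanced vertex along c, then P_2
   answers along p c by the same amount: this returns to a balanced vertex and
   keeps paired weights equal.  So P_2 always has a reply, and as the total
   weight decreases, P_1 eventually gets stuck.  The start vertex is
   balanced, and unit weights are trivially paired. *)

Definition cube_adj (I : finType) : rel {set I} :=
  fun A B => #|(A :\: B) :|: (B :\: A)| == 1.

Section Flip.
Variable I : finType.
Implicit Types (A : {set I}) (i j : I).

Definition flip A j : {set I} := [set x | (x \in A) (+) (x == j)].

Lemma in_flip A j x : (x \in flip A j) = (x \in A) (+) (x == j).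
Proof. by rewrite inE. Qed.

Lemma flipK j : involutive (flip^~ j).
Proof. by move=> A; apply/setP=> x; rewrite !in_flip addbK. Qed.

Lemma flip_inj A : injective (flip A).
Proof.
move=> i j /setP/(_ i); rewrite !in_flip eqxx.
by case: (i \in A); case: eqP => //= _ /negP; rewrite ?negbK.
Qed.

Lemma flip_neq A j : flip A j != A.
Proof. by apply/eqP=> /setP/(_ j); rewrite in_flip eqxx; case: (j \in A). Qed.

Lemma cube_adj_flip A j : cube_adj A (flip A j).
Proof.
rewrite /cube_adj; have -> : A :\: flip A j :|: flip A j :\: A = [set j].
  by apply/setP=> x; rewrite !inE; case: (x \in A); case: (x == j).
by rewrite cards1.
Qed.

Lemma cube_adjP A B : cube_adj A B -> exists j, B = flip A j.
Proof.
move/cards1P=> [j hj]; exists j; apply/setP=> x; move/setP/(_ x): hj.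
by rewrite !inE; case: (x \in A); case: (x \in B); case: (x == j).
Qed.

Definition edge A j : {set {set I}} := [set A; flip A j].

End Flip.

Definition lower (T : eqType) (w : T -> nat) (E : T) (k : nat) : T -> nat :=
  fun e => if e == E then w e - k else w e.

Lemma sum_lower (T : finType) (w : T -> nat) E k :
  k <= w E -> \sum_e lower w E k e + k = \sum_e w e.
Proof.
move=> kw; rewrite (bigD1 E) // [RHS](bigD1 E) //= /lower eqxx.
rewrite addnAC subnK //; congr (_ + _).
by apply: eq_bigr => e /negbTE ->.
Qed.

Section Mirror.
Variables (I : finType) (p : I -> I).
Hypotheses (pK : involutive p) (pN : forall i, p i != i).
Implicit Types (X Z : {set I}) (c d : I).

Definition balanced_at X c := (c \in X) == (p c \in X).

Definition mirror X c := flip (flip X c) (p c).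

Definition mirror_symmetric (w : {set {set I}} -> nat) :=
  forall X c, balanced_at X c -> w (edge X c) = w (edge (mirror X c) (p c)).

Lemma in_mirror X c x :
  (x \in mirror X c) = (x \in X) (+) (x == c) (+) (x == p c).
Proof. by rewrite !in_flip. Qed.

Lemma inv_eq c d : (p c == d) = (c == p d).
Proof. by apply/eqP/eqP => [<-|->]; rewrite pK. Qed.

Lemma mirrorK X c : mirror (mirror X c) (p c) = X.
Proof. by rewrite /mirror flipK pK flipK. Qed.

Lemma mirror_eq X Z c : (mirror X c == Z) = (X == mirror Z (p c)).
Proof.
apply/eqP/eqP => [<-|->]; first by rewrite mirrorK.
by have := mirrorK Z (p c); rewrite pK.
Qed.

Lemma balanced_at_mirror X c :
  balanced_at X c -> balanced_at (mirror X c) (p c).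
Proof.
rewrite /balanced_at !in_mirror pK !eqxx [c == p c]eq_sym (negbTE (pN c)).
by rewrite !addbF !addbT => /eqP->.
Qed.

Lemma balanced_mirror X j :
  (forall c, balanced_at X c) -> forall c, balanced_at (mirror X j) c.
Proof.
move=> balX c; rewrite /balanced_at !in_mirror (eqP (balX c)).
by rewrite !inv_eq pK addbAC.
Qed.

Lemma edge_mirror X c : edge (mirror X c) (p c) = [set flip X c; mirror X c].
Proof. by rewrite /edge /mirror flipK setUC. Qed.

Lemma edge_eq X Z c d : balanced_at X c -> balanced_at Z d ->
  (edge X c == edge Z d) = (X == Z) && (c == d).
Proof.
move=> balX balZ; apply/eqP/andP => [he|[/eqP-> /eqP->] //].
have : flip X c \in edge Z d by rewrite -he !inE eqxx orbT.
have : X \in edge Z d by rewrite -he set21.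
rewrite !in_set2 => /orP[/eqP->|/eqP XZ]; last subst X.
  by rewrite (negbTE (flip_neq _ _)) => /eqP/flip_inj ->.
rewrite (negbTE (flip_neq (flip Z d) c)) orbF => /eqP.
rewrite -{2}(flipK d Z) => /flip_inj dc; subst d.
move: balX balZ; rewrite /balanced_at !in_flip eqxx (negbTE (pN c)) addbF addbT.
by move/eqP=> <-; case: (c \in Z).
Qed.

(* No disjointness of the two cases is needed: truncated subtractions of k
   commute. *)
Lemma mirror_symmetric_lower w B j k : balanced_at B j -> mirror_symmetric w ->
  mirror_symmetric (lower (lower w (edge B j) k) (edge (mirror B j) (p j)) k).
Proof.
move=> balB symw X c balX; have balXm := balanced_at_mirror balX.
have balBm := balanced_at_mirror balB.
rewrite /lower !(edge_eq _ balBm) // !(edge_eq _ balB) //.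
rewrite !mirror_eq !inv_eq pK -(symw _ _ balX).
have -> : (X == mirror (mirror B j) (p c)) && (c == j) = (X == B) && (c == j).
  by case: (eqVneq c j) => [->|]; rewrite ?andbF ?mirrorK.
have -> : (X == mirror B (p c)) && (c == p j) = (X == mirror B j) && (c == p j).
  by case: (eqVneq c (p j)) => [->|]; rewrite ?andbF ?pK.
by case: (_ && _); case: (_ && _); rewrite // subnAC.
Qed.

Lemma mirror_strategy_lose B w :
  (forall c, balanced_at B c) -> mirror_symmetric w ->
  nim_lose (@cube_adj I) (B, w).
Proof.
have [N] := ubnP (\sum_e w e); elim: N => // N IH in B w *.
rewrite ltnS => sum_w balB symw.
constructor=> [[u w1]] /= [/cube_adjP[j ->] [k [k_gt0 [k_le w1E]]]].
rewrite -[[set B; flip B j]]/(edge B j) in k_le w1E.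
set E1 := edge B j; set E2 := edge (mirror B j) (p j).
have E21 : (E2 == E1) = false.
  by rewrite edge_eq ?balanced_at_mirror // (negbTE (pN j)) andbF.
have w1_E2 : w1 E2 = w E1 by rewrite w1E E21 (symw _ _ (balB j)).
have sum_w1 : \sum_e w1 e + k = \sum_e w e.
  by rewrite -(sum_lower k_le); congr (_ + _); apply: eq_bigr => e _; rewrite w1E.
apply: (@NimWin _ _ _ (mirror B j, lower w1 E2 k)).
  split; first exact: cube_adj_flip.
  by exists k; rewrite -edge_mirror -/E2 w1_E2.
apply: IH; last 2 first.
- exact: balanced_mirror.
- move=> X c balX; have := mirror_symmetric_lower k (balB j) symw balX.
  by rewrite /lower !w1E.
have sum_w2 := sum_lower (w := w1) (E := E2) (k := k); rewrite w1_E2 in sum_w2.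
rewrite -sum_w1 -(sum_w2 k_le) -addnA in sum_w; apply: leq_trans sum_w.
by rewrite -[X in X < _]addn0 ltn_add2l addn_gt0 k_gt0.
Qed.

End Mirror.

Lemma partner_lt n (i : 'I_(2 * n)) : (if odd i then i.-1 else i.+1) < 2 * n.
Proof.
case: i => i lt_i /=; case: ifP => odd_i; first exact: leq_ltn_trans (leq_pred i) lt_i.
rewrite ltn_neqAle lt_i andbT; apply/eqP => /(congr1 odd).
by rewrite /= odd_i oddM.
Qed.

Definition partner n (i : 'I_(2 * n)) : 'I_(2 * n) := Ordinal (partner_lt i).

Lemma partnerK n : involutive (@partner n).
Proof.
move=> [[|i] lt_i]; apply: val_inj => //=.
by case odd_i: (odd i) => /=; rewrite ?odd_i.
Qed.

Lemma partner_neq n (i : 'I_(2 * n)) : partner i != i.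
Proof.
case: i => [[|i] lt_i]; rewrite -val_eqE //=.
by case: ifP => _; rewrite ?eqSS ?(gtn_eqF (ltnSn _)) ?(ltn_eqF (ltnSn _)).
Qed.

Theorem mainTheorem3 (n : nat) (hn : 1 <= n) :
  second_player_wins (hypercube_adj (2 * n))
    (pair (set0 : {set 'I_(2 * n)}) (unit_weights {set 'I_(2 * n)})).
Proof.
apply: (mirror_strategy_lose (@partnerK n) (@partner_neq n)).
- by move=> c; rewrite /balanced_at !inE.
- by [].
Qed.
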